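(* Assume $X_t>0$ for all $t\in\mathcal T$ and let $\alpha=\sum_tY_t/X_t$. Let $\delta_{\mathcal X}\in[0,1]$ and let $\hat F_{\mathcal X}\in\mathbb F(\boldsymbol X)$ be any strategy whose $c$-marginals satisfy, for all $c\in\mathcal C$ and $\boldsymbol u\in\mathbb R^T_{\ge0}$, $$\hat F_{\mathcal X,c}(\boldsymbol u)=1-\delta_{\mathcal X}+\delta_{\mathcal X}\min_{t\in\mathcal T}\min\Big\{\frac{\delta_{\mathcal X}}{2v_cX_t}u_t,1\Big\}.$$ Then in the weakest-link game, for every $F_{\mathcal Y}\in\mathbb F(\boldsymbol Y)$, $$\pi_{\mathcal X}(\hat F_{\mathcal X},F_{\mathcal Y})\ge\delta_{\mathcal X}\Big(1-\frac{\delta_{\mathcal X}}{2}\alpha\Big).$$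
   Context: Contests $\mathcal C=\{1,\dots,C\}$ with values $v_c>0$, $\sum_cv_c=1$; types $\mathcal T=\{1,\dots,T\}$; $\boldsymbol Y\in\mathbb R^T_{\ge0}$. $\mathbb F(\boldsymbol X)$ is the set of probability distributions $F$ on $\mathbb R^{CT}_{\ge0}$ (points $\mathbf x=(\boldsymbol x_c)_c$, $\boldsymbol x_c=(x_{c,t})_t$) with $\mathbb E_{\mathbf x\sim F}[\sum_cx_{c,t}]\le X_t$ for all $t$; similarly $\mathbb F(\boldsymbol Y)$. $c$-marginal: $F_c(\boldsymbol u)=\mathbb P_{\mathbf x\sim F}[x_{c,t}\le u_t\ \forall t]$. Weakest-link rule $W_{\mathrm{WL}}(\boldsymbol x,\boldsymbol y)=\mathbf 1\{x_t\ge y_t\ \forall t\}$; $\pi_{\mathcal X}(F_{\mathcal X},F_{\mathcal Y})=\mathbb E[\sum_cv_cW_{\mathrm{WL}}(\boldsymbol x_c,\boldsymbol y_c)]$ with independent $\mathbf x\sim F_{\mathcal X}$, $\mathbf y\sim F_{\mathcal Y}$. (A strategy with the displayed marginals: in contest $c$, with probability $1-\delta_{\mathcal X}$ allocate nothing; otherwise draw $U\sim\mathrm{Unif}[0,1]$ and allocate $x_{c,t}=\frac{2v_cX_t}{\delta_{\mathcal X}}U$ of every type $t$.) *)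

From HB Require Import structures.
From mathcomp Require Import all_boot all_order all_algebra.
From mathcomp Require Import all_classical all_reals all_analysis.
Set Implicit Arguments. Unset Strict Implicit. Unset Printing Implicit Defensive.
Import Order.TTheory GRing.Theory Num.Theory.
Local Open Scope classical_set_scope.
Local Open Scope ring_scope.

(* A point of R^{C T} is an nC-tuple (contests) of nT-tuples (types) of reals;
   tuples carry the product sigma-algebra of mathcomp-analysis. *)
Definition alloc (R : realType) (nC nT : nat) := nC.-tuple (nT.-tuple R).

Definition xct (R : realType) nC nT (x : alloc R nC nT) (c : 'I_nC) (t : 'I_nT) : R :=
  tnth (tnth x c) t.

Definition in_FF (R : realType) nC nT (X : 'I_nT -> R)
    (P : probability (alloc R nC nT) R) : Prop :=
  {ae P, forall x : alloc R nC nT, forall c t, 0 <= xct x c t} /\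
  forall t : 'I_nT,
    (\int[P]_(x in setT) (\sum_(c < nC) xct x c t)%:E <= (X t)%:E)%E.

Definition marginal (R : realType) nC nT (P : probability (alloc R nC nT) R)
    (c : 'I_nC) (u : 'I_nT -> R) : \bar R :=
  P [set x : alloc R nC nT | forall t, xct x c t <= u t].

Definition W_WL (R : realType) nT (x y : nT.-tuple R) : R :=
  if [forall t, tnth y t <= tnth x t] then 1 else 0.

Definition piX (R : realType) nC nT (v : 'I_nC -> R)
    (FX FY : probability (alloc R nC nT) R) : \bar R :=
  (\int[FX \x FY]_(z in setT)
     (\sum_(c < nC) v c * W_WL (tnth z.1 c) (tnth z.2 c))%:E)%E.

From HB Require Import structures.
From mathcomp Require Import all_boot all_order all_algebra.
From mathcomp Require Import all_classical all_reals all_analysis.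
From mathcomp Require Import measurable_realfun ring lra.
Set Implicit Arguments. Unset Strict Implicit. Unset Printing Implicit Defensive.
Import Order.TTheory GRing.Theory Num.Theory.
Local Open Scope classical_set_scope.
Local Open Scope ring_scope.

(* Fix the opponent's allocation y.  In contest c the strategy allocates 0
   with probability 1 - del and otherwise a uniform point of the diagonal
   segment from 0 to (2 v_c X_t / del)_t, so a union bound over the types in
   which it may fall short gives
     P[x_c >= u] >= del (1 - sum_t del u_t / (2 v_c X_t))   for u >= 0.
   The weakest-link rule pays whenever x_c >= y_c^+, hence the expected payoff
   against y is at least del - del^2/2 sum_t (sum_c y_{c,t}^+) / X_t; averaging
   over y with the budget E[sum_c y_{c,t}] <= Y_t yields the bound. *)

Section measurability.
Context d (T : measurableType d) (R : realType).

Lemma measurable_forall_le n (f g : 'I_n -> T -> R) :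
  (forall t, measurable_fun setT (f t)) -> (forall t, measurable_fun setT (g t)) ->
  measurable [set z | forall t, f t z <= g t z].
Proof.
move=> mf mg.
rewrite (_ : [set z | _] = \bigcap_(t in setT) [set z | f t z <= g t z]).
  apply: fin_bigcap_measurable => [|t _]; first exact: finite_finset.
  rewrite -[X in measurable X]setTI.
  exact: measurable_fun_le.
by apply/seteqP; split => z /= fgz t => [_|]; apply: fgz.
Qed.

End measurability.

Section tail_of_uniform_diagonal.
Context d (T : measurableType d) (R : realType) (P : probability T R).
Variables (n : nat) (g : 'I_n -> T -> R) (a : 'I_n -> R) (del : R).
Hypothesis mg : forall t, measurable_fun setT (g t).
Hypothesis a_gt0 : forall t, 0 < a t.
Hypothesis del01 : 0 <= del <= 1.
Hypothesis cdf : forall u : 'I_n -> R, (forall t, 0 <= u t) ->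
  P [set z | forall t, g t z <= u t] =
  (1 - del + del * \big[Num.min/1]_(t < n) Num.min (a t * u t) 1)%:E.

Variable u : 'I_n -> R.
Hypothesis u_ge0 : forall t, 0 <= u t.

Let A := [set z | forall t, u t <= g t z].
Let box := [set z | forall t, g t z <= (a t)^-1].
Let zero := [set z | forall t, g t z <= 0].
(* Indexed by [nat] to fit [Boole_inequality]. *)
Let slab (k : nat) := [set z | forall t : 'I_n,
  g t z <= if t == k :> nat then u t else (a t)^-1].

Let measurable_sublevel (h : 'I_n -> R) :
  measurable [set z | forall t, g t z <= h t].
Proof. by apply: measurable_forall_le => // t; exact: measurable_cst. Qed.

Let mA : measurable A.
Proof. by apply: measurable_forall_le => // t; exact: measurable_cst. Qed.

Lemma box_cover :
  box `<=` A `|` zero `|` \big[setU/set0]_(t < n) (slab t `\` zero).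
Proof.
move=> z box_z; have [Az|nAz] := pselect (A z); first by left; left.
have [zero_z|nzero_z] := pselect (zero z); first by left; right.
right; move/existsNP: nAz => [t /negP]; rewrite -ltNge => gz_lt.
apply: (bigsetU_sup (F := fun k => slab k `\` zero) (ltn_ord t)); split => //= s.
by case: eqP => [/val_inj ->|_]; [exact: ltW|exact: box_z].
Qed.

Lemma measure_box : P box = 1%:E.
Proof.
rewrite (cdf (u := fun t => (a t)^-1)) => [|t]; last by rewrite invr_ge0 ltW.
by rewrite bigmin_eq_id ?mulr1 ?subrK // => t _; rewrite mulfV ?minxx // gt_eqF.
Qed.

Lemma measure_zero (t0 : 'I_n) : P zero = (1 - del)%:E.
Proof.
rewrite (cdf (u := fun=> 0)) // (_ : \big[_/_]_(t < n) _ = 0) ?mulr0 ?addr0 //.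
apply/le_anti/andP; split.
  by apply: le_trans (bigmin_le _ t0 _) _; rewrite mulr0 ge_min lexx.
by apply: le_bigmin => // t _; rewrite mulr0 le_min lexx ler01.
Qed.

Lemma measure_slabD_zero (t : 'I_n) :
  (P (slab t `\` zero) <= (del * (a t * u t))%:E)%E.
Proof.
have zero_slab : zero `<=` slab t.
  move=> z zero_z s; apply: le_trans (zero_z s) _.
  by case: ifP => _; [exact: u_ge0|rewrite invr_ge0 ltW].
have mslab : measurable (slab t) := measurable_sublevel _.
pose m := \big[Num.min/1]_(s < n)
  Num.min (a s * (if s == t :> nat then u s else (a s)^-1)) 1.
have Pslab : P (slab t) = (1 - del + del * m)%:E.
  by apply: cdf => s; case: ifP => _; [exact: u_ge0|rewrite invr_ge0 ltW].
rewrite measureD ?(setIidr zero_slab) //; last first.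
- by rewrite (le_lt_trans (probability_le1 _ _)) ?ltry.
- exact: measurable_sublevel (fun=> 0).
have -> : (P (slab t) - P zero = (1 - del + del * m)%:E - (1 - del)%:E)%E.
  by congr (_ - _)%E; [exact: Pslab|exact: measure_zero].
rewrite -EFinB lee_fin addrAC subrr add0r; apply: ler_wpM2l; first by case/andP: del01.
by apply: le_trans (bigmin_le _ t _) _; rewrite eqxx ge_min lexx.
Qed.

Lemma box_union_bound :
  (1%:E <= P A + P zero + \sum_(t < n) P (slab t `\` zero))%E.
Proof.
have mzero : measurable zero := measurable_sublevel (fun=> 0).
have mslabD k : measurable (slab k `\` zero).
  exact: measurableD (measurable_sublevel _) mzero.
have mU : measurable (\big[setU/set0]_(t < n) (slab t `\` zero)).
  exact: bigsetU_measurable.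
rewrite -measure_box; apply: le_trans (le_measure P _ _ box_cover) _.
- by rewrite inE; exact: measurable_sublevel.
- by rewrite inE; apply: measurableU => //; exact: measurableU.
apply: le_trans (measureU2 _ _ _) _ => //; first exact: measurableU.
apply: leeD; first exact: measureU2.
by apply: (@Boole_inequality _ _ _ P (fun k => slab k `\` zero) n) => k _.
Qed.

Lemma tail_ge : ((del - del * \sum_(t < n) a t * u t)%:E <= P A)%E.
Proof.
have [n0|n_gt0] := posnP n.
  have no_index (t : 'I_n) : False by move: (ltn_ord t); rewrite {2}n0.
  have -> : A = setT by apply/seteqP; split => // z _ t; case: (no_index t).
  rewrite probability_setT big1 ?mulr0 ?subr0 ?lee_fin; first by case/andP: del01.
  by move=> t; case: (no_index t).
have := box_union_bound; rewrite (measure_zero (Ordinal n_gt0)) => cover.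
have slabs : (\sum_(t < n) P (slab t `\` zero) <= (del * \sum_(t < n) a t * u t)%:E)%E.
  by rewrite mulr_sumr -sumEFin; apply: lee_sum => t _; exact: measure_slabD_zero.
have := le_trans cover (leeD2l _ slabs).
rewrite -(fineK (fin_num_measure P A mA)) -!EFinD !lee_fin; lra.
Qed.

End tail_of_uniform_diagonal.

Definition payoff (R : realType) nC nT (v : 'I_nC -> R) (x y : alloc R nC nT) : R :=
  \sum_(c < nC) v c * W_WL (tnth x c) (tnth y c).

Definition spend (R : realType) nC nT (t : 'I_nT) (y : alloc R nC nT) : R :=
  \sum_(c < nC) Num.max (xct y c t) 0.

Lemma W_WL_indicE (R : realType) (T : Type) n (f g : T -> n.-tuple R) z :
  W_WL (f z) (g z) = \1_[set z | forall t, tnth (g z) t <= tnth (f z) t] z :> R.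
Proof.
rewrite /W_WL indicE; case: forallP => [fg|nfg]; first by rewrite mem_set.
by rewrite memNset // => fg; apply: nfg => t; exact: fg.
Qed.

Section allocations.
Context (R : realType) (nC nT : nat).
Local Notation alloc := (alloc R nC nT).

Lemma measurable_xct c t : measurable_fun setT (fun x : alloc => xct x c t).
Proof. exact: measurableT_comp (measurable_tnth t) (measurable_tnth c). Qed.

Lemma measurable_upper_set c (u : 'I_nT -> R) :
  measurable [set x : alloc | forall t, u t <= xct x c t].
Proof.
by apply: measurable_forall_le => t; [exact: measurable_cst|exact: measurable_xct].
Qed.

Lemma payoff_ge0 (v : 'I_nC -> R) (x y : alloc) :
  (forall c, 0 <= v c) -> 0 <= payoff v x y.
Proof.
move=> v_ge0; apply: sumr_ge0 => c _; rewrite mulr_ge0 // /W_WL.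
by case: ifP.
Qed.

Lemma measurable_payoff (v : 'I_nC -> R) :
  measurable_fun setT (fun z : alloc * alloc => (payoff v z.1 z.2)%:E).
Proof.
apply/measurable_EFinP; apply: measurable_sum => c.
apply: measurable_funM; first exact: measurable_cst.
rewrite (_ : (fun z => _) = \1_[set z : alloc * alloc |
    forall t, xct z.2 c t <= xct z.1 c t]).
  apply/measurable_indic/measurable_forall_le => t.
  - exact: measurableT_comp (measurable_xct c t) measurable_snd.
  - exact: measurableT_comp (measurable_xct c t) measurable_fst.
by apply/funext => z; rewrite (W_WL_indicE (fun z : alloc * alloc => tnth z.1 c)
  (fun z => tnth z.2 c)).
Qed.

Lemma integral_payoff (mu : {measure set alloc -> \bar R}) (v : 'I_nC -> R) y :
  (forall c, 0 <= v c) ->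
  (\int[mu]_x (payoff v x y)%:E =
   \sum_(c < nC) (v c)%:E * mu [set x | forall t, (xct y c t <= xct x c t)%R])%E.
Proof.
move=> v_ge0.
have mW c := measurable_upper_set c (xct y c).
under eq_integral => x _ do rewrite -sumEFin.
rewrite ge0_integral_sum //; first last.
- by move=> c x _; rewrite lee_fin mulr_ge0 // /W_WL; case: ifP.
- move=> c; apply/measurable_EFinP; apply: measurable_funM; first exact: measurable_cst.
  rewrite (_ : (fun x => _) = \1_[set x : alloc | forall t, xct y c t <= xct x c t]).
    exact: measurable_indic.
  by apply/funext => x; rewrite (W_WL_indicE (fun x : alloc => tnth x c) (fun=> tnth y c)).
apply: eq_bigr => c _.
under eq_integral => x _ do
  rewrite EFinM (W_WL_indicE (fun x : alloc => tnth x c) (fun=> tnth y c)).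
rewrite ge0_integralZl ?lee_fin //; last first.
  by apply/measurable_EFinP; apply: measurable_indic; exact: mW.
by rewrite integral_indic ?setIT //; exact: mW.
Qed.

Lemma spend_ge0 t (y : alloc) : 0 <= spend t y.
Proof. by apply: sumr_ge0 => c _; rewrite le_max lexx orbT. Qed.

Lemma measurable_spend t : measurable_fun setT (spend t : alloc -> R).
Proof.
by apply: measurable_sum => c; apply: measurable_maxr => //; exact: measurable_xct.
Qed.

Lemma integral_weighted_spend_le (Y : 'I_nT -> R) (FY : probability alloc R)
    (k : 'I_nT -> R) :
  in_FF Y FY -> (forall t, 0 <= k t) ->
  (\int[FY]_y (\sum_(t < nT) k t * spend t y)%:E <= (\sum_(t < nT) k t * Y t)%:E)%E.
Proof.
move=> [FY_ge0 FY_budget] k_ge0.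
under eq_integral => y _ do rewrite -sumEFin.
rewrite ge0_integral_sum //; first last.
- by move=> t y _; rewrite lee_fin mulr_ge0 ?spend_ge0.
- move=> t; apply/measurable_EFinP.
  by apply: measurable_funM; [exact: measurable_cst|exact: measurable_spend].
rewrite -sumEFin; apply: lee_sum => t _.
under eq_integral => y _ do rewrite EFinM.
rewrite ge0_integralZl ?lee_fin //; first last.
- by move=> y _; rewrite lee_fin spend_ge0.
- by apply/measurable_EFinP; exact: measurable_spend.
rewrite EFinM lee_wpmul2l ?lee_fin //.
have spendE : (\int[FY]_y (spend t y)%:E = \int[FY]_y (\sum_(c < nC) xct y c t)%:E)%E.
  apply: ae_eq_integral => //.
  - by apply/measurable_EFinP; exact: measurable_spend.
  - by apply/measurable_EFinP; apply: measurable_sum => c; exact: measurable_xct.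
  - apply: filterS FY_ge0 => y y_ge0 _; congr EFin.
    by apply: eq_bigr => c _; rewrite max_l.
by rewrite spendE; exact: FY_budget.
Qed.

End allocations.

Section weakest_link_guarantee.
Context (R : realType) (nC nT : nat) (v : 'I_nC -> R) (X : 'I_nT -> R) (del : R).
Context (FX : probability (alloc R nC nT) R).
Hypothesis v_gt0 : forall c, 0 < v c.
Hypothesis v_sum1 : \sum_(c < nC) v c = 1.
Hypothesis X_gt0 : forall t, 0 < X t.
Hypothesis del_gt0 : 0 < del.
Hypothesis del_le1 : del <= 1.
Hypothesis FX_marginal : forall (c : 'I_nC) (u : 'I_nT -> R), (forall t, 0 <= u t) ->
  marginal FX c u =
  (1 - del + del * \big[Num.min/1]_(t < nT) Num.min (del / (2 * v c * X t) * u t) 1)%:E.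

Let v_ge0 c : 0 <= v c. Proof. exact: ltW. Qed.

Lemma contest_tail_ge c u : (forall t, 0 <= u t) ->
  ((del - del * \sum_(t < nT) del / (2 * v c * X t) * u t)%:E
     <= FX [set x | forall t, (u t <= xct x c t)%R])%E.
Proof.
apply: tail_ge => [t|t||]; first exact: measurable_xct.
- by rewrite divr_gt0 // !mulr_gt0.
- by rewrite (ltW del_gt0).
- exact: FX_marginal.
Qed.

Lemma payoff_section_ge (y : alloc R nC nT) :
  (del%:E <= \int[FX]_x (payoff v x y)%:E
             + (\sum_(t < nT) del * del / 2 / X t * spend t y)%:E)%E.
Proof.
rewrite integral_payoff //.
pose m c t := Num.max (xct y c t) 0.
have contest c : ((v c * del - \sum_(t < nT) del * del / 2 / X t * m c t)%:E
    <= (v c)%:E * FX [set x | forall t, (xct y c t <= xct x c t)%R])%E.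
  have -> : v c * del - \sum_(t < nT) del * del / 2 / X t * m c t
      = v c * (del - del * \sum_(t < nT) del / (2 * v c * X t) * m c t).
    rewrite mulrBr !mulr_sumr; congr (_ - _); apply: eq_bigr => t _.
    by field; rewrite !gt_eqF.
  rewrite EFinM; apply: lee_wpmul2l; first by rewrite lee_fin.
  apply: le_trans (contest_tail_ge c (u := m c) _) _ => [t|]; first by rewrite le_max lexx orbT.
  apply: le_measure; rewrite ?inE; try exact: measurable_upper_set.
  by move=> x y_le_x t; apply: le_trans (y_le_x t); rewrite le_max lexx.
have : ((\sum_(c < nC) (v c * del - \sum_(t < nT) del * del / 2 / X t * m c t))%:E
    <= \sum_(c < nC) (v c)%:E * FX [set x | forall t, (xct y c t <= xct x c t)%R])%E.
  by rewrite -sumEFin; apply: lee_sum => c _; exact: contest.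
have spendE : \sum_(c < nC) \sum_(t < nT) del * del / 2 / X t * m c t
    = \sum_(t < nT) del * del / 2 / X t * spend t y.
  by rewrite exchange_big; apply: eq_bigr => t _; rewrite /spend mulr_sumr.
by rewrite sumrB -mulr_suml v_sum1 mul1r spendE -leeBlDr // -EFinB.
Qed.

Lemma integral_payoff_ge (Y : 'I_nT -> R) (FY : probability (alloc R nC nT) R) :
  in_FF Y FY ->
  ((del - del * (del / 2 * \sum_(t < nT) Y t / X t))%:E
     <= \int[FY]_y \int[FX]_x (payoff v x y)%:E)%E.
Proof.
move=> FY_in.
pose k t := del * del / 2 / X t.
have k_ge0 t : 0 <= k t by rewrite /k !divr_ge0 ?mulr_ge0 ?ltW.
have mpay := @measurable_payoff R nC nT v.
have pay_ge0 (z : alloc R nC nT * alloc R nC nT) : (0 <= (payoff v z.1 z.2)%:E)%E.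
  by rewrite lee_fin payoff_ge0.
have mG := @measurable_fun_fubini_tonelli_G _ _ _ _ _ FX _ mpay pay_ge0.
have mK : measurable_fun setT
    (fun y : alloc R nC nT => (\sum_(t < nT) k t * spend t y)%:E).
  apply/measurable_EFinP; apply: measurable_sum => t.
  by apply: measurable_funM; [exact: measurable_cst|exact: measurable_spend].
have : (del%:E <= \int[FY]_y (\int[FX]_x (payoff v x y)%:E
                               + (\sum_(t < nT) k t * spend t y)%:E))%E.
  rewrite -[del%:E]mule1 -(probability_setT FY) -integral_cst //.
  apply: ge0_le_integral => //.
  - by move=> y _; rewrite lee_fin ltW.
  - exact: emeasurable_funD.
  - by move=> y _; exact: payoff_section_ge.
rewrite ge0_integralD //; last first.
  by move=> y _; rewrite lee_fin sumr_ge0 // => t _; rewrite mulr_ge0 ?spend_ge0.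
  by move=> y _; apply: integral_ge0 => x _; exact: pay_ge0 (x, y).
have kY : \sum_(t < nT) k t * Y t = del * (del / 2 * \sum_(t < nT) Y t / X t).
  by rewrite !mulr_sumr; apply: eq_bigr => t _; rewrite /k; field; rewrite gt_eqF.
move/le_trans/(_ (leeD2l _ (integral_weighted_spend_le FY_in k_ge0))).
by rewrite kY -leeBlDr // -EFinB.
Qed.

End weakest_link_guarantee.

Unset Implicit Arguments. Set Strict Implicit.

Theorem lemma5 (R : realType) (nC nT : nat) (v : 'I_nC -> R)
  (X Y : 'I_nT -> R) (deltaX : R)
  (FXhat : probability (alloc R nC nT) R) :
  (forall c, 0 < v c) -> \sum_(c < nC) v c = 1 ->
  (forall t, 0 < X t) -> (forall t, 0 <= Y t) ->
  0 <= deltaX <= 1 ->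
  in_FF X FXhat ->
  (forall (c : 'I_nC) (u : 'I_nT -> R), (forall t, 0 <= u t) ->
     marginal FXhat c u =
     (1 - deltaX + deltaX *
        \big[Num.min/1]_(t < nT) Num.min (deltaX / (2 * v c * X t) * u t) 1)%:E) ->
  forall FY : probability (alloc R nC nT) R, in_FF Y FY ->
  ((deltaX * (1 - deltaX / 2 * \sum_(t < nT) Y t / X t))%:E
     <= piX v FXhat FY)%E.
Proof.
move=> v_gt0 v_sum1 X_gt0 _ /andP[del_ge0 del_le1] _ FX_marginal FY FY_in.
have pay_ge0 (z : alloc R nC nT * alloc R nC nT) : (0 <= (payoff v z.1 z.2)%:E)%E.
  by rewrite lee_fin payoff_ge0 // => c; exact: ltW.
rewrite /piX (fubini_tonelli2 _ (@measurable_payoff R nC nT v) pay_ge0).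
move: del_ge0; rewrite le_eqVlt => /orP[/eqP<-|del_gt0].
  by rewrite mul0r; apply: integral_ge0 => y _; apply: integral_ge0 => x _.
by rewrite mulrBr mulr1; exact: integral_payoff_ge.
Qed.
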